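(* Let $T$ be a positive integer, $x \in \{0,1\}^T$, $p \in [0,1]^T$, and let $S \subset [0,1]$ be a finite set. Suppose $\mathcal{D} = (\mathcal{D}_1,\ldots,\mathcal{D}_T) \in \underline{\mathcal{C}}(x)$ where every $\mathcal{D}_t$ is supported on $S$. Then $\mathsf{CalDist}(x,p) \le \|p - \mathcal{D}\|_1 + 4|S|$.
   Context: For $x \in \{0,1\}^T$, let $\mathcal{C}(x) = \{q \in [0,1]^T : \sum_{t=1}^T (x_t - q_t)\mathbf{1}[q_t = \alpha] = 0 \text{ for all } \alpha \in [0,1]\}$ and $\mathsf{CalDist}(x,p) = \min_{q \in \mathcal{C}(x)} \|p-q\|_1$. Let $\underline{\mathcal{C}}(x)$ be the set of $T$-tuples $\mathcal{D} = (\mathcal{D}_1,\ldots,\mathcal{D}_T)$ of probability distributions, each with finite support contained in $[0,1]$, such that $\sum_{t=1}^T (x_t - \alpha)\mathcal{D}_t(\alpha) = 0$ for every $\alpha \in [0,1]$. For such $\mathcal{D}$, $\|p - \mathcal{D}\|_1 = \sum_{t=1}^T \mathbb{E}_{q_t \sim \mathcal{D}_t}|p_t - q_t|$. *)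

From HB Require Import structures.
From mathcomp Require Import all_boot all_order all_algebra.
From mathcomp Require Import finmap.
From mathcomp Require Import all_classical all_reals.
Set Implicit Arguments. Unset Strict Implicit. Unset Printing Implicit Defensive.
Import Order.TTheory GRing.Theory Num.Theory.
Local Open Scope classical_set_scope.
Local Open Scope ring_scope.

Section Defs.
Variables (R : realType) (T : nat).

Definition calibrated (x q : 'I_T -> R) : Prop :=
  (forall t, 0 <= q t <= 1) /\
  forall a : R, 0 <= a <= 1 ->
    \sum_(t < T) (x t - q t) * (q t == a)%:R = 0.

Definition l1dist (p q : 'I_T -> R) : R := \sum_(t < T) `|p t - q t|.

(* CalDist(x,p) = min_{q in C(x)} ||p - q||_1 (the min is attained, so it
   equals the infimum used here) *)
Definition CalDist (x p : 'I_T -> R) : R :=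
  inf [set l1dist p q | q in [set q | calibrated x q]].

Definition is_fdist01 (d : R -> R) : Prop :=
  [/\ forall a, 0 <= d a,
      finite_set [set a | d a != 0],
      [set a | d a != 0] `<=` [set a | 0 <= a <= 1]
    & \sum_(a \in [set: R]) d a = 1].

Definition lowC (x : 'I_T -> R) (D : 'I_T -> R -> R) : Prop :=
  (forall t, is_fdist01 (D t)) /\
  forall a : R, 0 <= a <= 1 -> \sum_(t < T) (x t - a) * D t a = 0.

Definition l1dist_distr (p : 'I_T -> R) (D : 'I_T -> R -> R) : R :=
  \sum_(t < T) \sum_(a \in [set: R]) D t a * `|p t - a|.

End Defs.

From HB Require Import structures.
From mathcomp Require Import all_boot all_order all_algebra.
From mathcomp Require Import finmap.
From mathcomp Require Import all_classical all_reals.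
From mathcomp Require Import ring lra.
Set Implicit Arguments.
Unset Strict Implicit.
Unset Printing Implicit Defensive.

Import Order.TTheory GRing.Theory Num.Theory.
Local Open Scope classical_set_scope.
Local Open Scope ring_scope.

(* Write S = {a_0 < ... < a_(k-1)} and split the rounds according to their
   outcome x_t.  Inside each outcome class, order the rounds by p_t and couple
   them monotonically with the atoms of the aggregated distribution sum_t D_t:
   the round of rank r goes to the first atom at which the cumulative mass
   reaches r + 1.  Writing |u - v| as the integral of |1[u <= z] - 1[v <= z]|,
   a monotone coupling on the line costs at most 1 more than the fractional
   transport given by D, so rounding every p_t to its atom costs at most
   ||p - D||_1 + 2.  Each atom a_J receives, for each outcome, a number of
   rounds within 1 of its D-mass, so the calibration of D at a_J forces the
   frequency of ones among these rounds to be within 1/(their number) of a_J.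
   Predicting these frequencies is calibrated and moves the predictions by at
   most 1 in total per atom, whence CalDist(x,p) <= ||p - D||_1 + 2 + |S|,
   and S is nonempty. *)

Lemma downclosed_ltn_count (P : pred nat) (k : nat) :
  (forall i i', (i <= i')%N -> (i' < k)%N -> P i' -> P i) ->
  forall i, (i < k)%N -> P i = (i < count P (iota 0 k))%N.
Proof.
move=> Pdown i ik; have [Pi|nPi] := boolP (P i).
  rewrite -(subnKC ik) iotaD count_cat.
  rewrite (@eq_in_count _ _ predT) ?count_predT ?size_iota ?ltn_addr //.
  by move=> i'; rewrite mem_iota add0n => /andP[_ i'i]; apply: Pdown Pi.
rewrite -(subnKC (ltnW ik)) iotaD count_cat.
have -> : count P (iota i (k - i)) = 0%N.
  apply/eqP; rewrite -leqn0 leqNgt -has_count; apply/hasPn => i'.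
  rewrite mem_iota subnKC ?(ltnW ik) // => /andP[ii' i'k].
  by apply: contra nPi; apply: Pdown.
by rewrite addn0 ltnNge (leq_trans (count_size _ _)) ?size_iota.
Qed.

Section StepIntegral.
Variable R : realDomainType.
Implicit Types (Z : seq R) (h : R -> R).

Definition step_integral Z h : R :=
  \sum_(zz <- zip Z (behead Z)) (zz.2 - zz.1) * h zz.1.

Lemma step_integral_cons2 z0 z1 Z h :
  step_integral [:: z0, z1 & Z] h = (z1 - z0) * h z0 + step_integral (z1 :: Z) h.
Proof. by rewrite /step_integral /= big_cons. Qed.

Lemma step_integral1 z h : step_integral [:: z] h = 0.
Proof. by rewrite /step_integral big_nil. Qed.

Lemma step_integral_sum (I : Type) (r : seq I) (P : pred I) (F : I -> R -> R) Z :
  step_integral Z (fun z => \sum_(i <- r | P i) F i z) =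
  \sum_(i <- r | P i) step_integral Z (F i).
Proof. by rewrite /step_integral exchange_big; apply: eq_bigr => zz _; rewrite mulr_sumr. Qed.

Lemma step_integralD Z h1 h2 :
  step_integral Z (fun z => h1 z + h2 z) = step_integral Z h1 + step_integral Z h2.
Proof. by rewrite /step_integral -big_split; apply: eq_bigr => zz _; rewrite mulrDr. Qed.

Lemma step_integralB Z h1 h2 :
  step_integral Z (fun z => h1 z - h2 z) = step_integral Z h1 - step_integral Z h2.
Proof. by rewrite /step_integral -sumrB; apply: eq_bigr => zz _; rewrite mulrBr. Qed.

Lemma step_integralZ Z c h :
  step_integral Z (fun z => c * h z) = c * step_integral Z h.
Proof. by rewrite /step_integral mulr_sumr; apply: eq_bigr => zz _; rewrite mulrCA. Qed.

Lemma eq_in_step_integral Z h h' : {in Z, h =1 h'} ->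
  step_integral Z h = step_integral Z h'.
Proof.
elim: Z => [|z0 Z IH] eqh; first by rewrite /step_integral !big_nil.
case: Z IH eqh => [|z1 Z] IH eqh.
  by rewrite !step_integral1.
rewrite !step_integral_cons2 eqh ?mem_head // IH // => z zZ.
by rewrite eqh // inE zZ orbT.
Qed.

Lemma ler_step_integral Z h h' : sorted <=%R Z -> (forall z, h z <= h' z) ->
  step_integral Z h <= step_integral Z h'.
Proof.
move=> + leh; elim: Z => [|z0 Z IH] sZ; first by rewrite /step_integral !big_nil.
case: Z IH sZ => [|z1 Z] IH; first by rewrite !step_integral1.
move=> /= /andP[z01 sZ]; rewrite !step_integral_cons2 lerD ?IH //.
by rewrite ler_wpM2l ?subr_ge0.
Qed.

Lemma step_integral_const1 z0 Z : sorted <=%R (z0 :: Z) ->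
  step_integral (z0 :: Z) (fun _ => 1) = last z0 Z - z0.
Proof.
elim: Z z0 => [|z1 Z IH] z0; first by rewrite step_integral1 subrr.
by move=> /= /andP[_ sZ]; rewrite step_integral_cons2 IH // mulr1 /=; lra.
Qed.

Lemma step_integral_const1_le1 Z : sorted <=%R Z -> {subset Z <= `[0, 1]} ->
  step_integral Z (fun _ => 1) <= 1.
Proof.
case: Z => [|z0 Z] sZ Z01; first by rewrite /step_integral big_nil.
rewrite step_integral_const1 //.
move: (Z01 _ (mem_head z0 Z)) (Z01 _ (mem_last z0 Z)).
by rewrite !in_itv /= => /andP[z0_ge0 _] /andP[_ zl_le1]; lra.
Qed.

Lemma step_integral_indicator z0 Z a : sorted <=%R (z0 :: Z) -> a \in z0 :: Z ->
  step_integral (z0 :: Z) (fun z => (a <= z)%R%:R) = last z0 Z - a.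
Proof.
elim: Z z0 a => [|z1 Z IH] z0 a sZ.
  by rewrite inE => /eqP ->; rewrite step_integral1 subrr.
move: (sZ) => /= /andP[z01 sZ'].
have z1_min z : z \in z1 :: Z -> z1 <= z.
  rewrite inE => /orP[/eqP -> //|zZ].
  by have /allP := order_path_min le_trans sZ'; apply.
rewrite inE => /orP[/eqP ->|aZ].
  rewrite step_integral_cons2 lexx mulr1.
  rewrite (@eq_in_step_integral _ _ (fun z => (z1 <= z)%R%:R)); last first.
    by move=> z /z1_min z1z; rewrite z1z (le_trans z01 z1z).
  by rewrite IH ?mem_head //=; lra.
rewrite step_integral_cons2 IH //=.
have [az0|] := lerP a z0; last by rewrite mulr0 add0r.
have -> : z1 = z0 by apply/eqP; rewrite eq_le z01 (le_trans (z1_min a aZ) az0).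
by rewrite subrr mul0r add0r.
Qed.

Lemma step_integral_dist Z a b : sorted <=%R Z -> a \in Z -> b \in Z ->
  step_integral Z (fun z => `|(a <= z)%R%:R - (b <= z)%R%:R|) = `|a - b|.
Proof.
wlog ab : a b / a <= b.
  move=> hw sZ aZ bZ; have [ab|/ltW ba] := leP a b; first exact: hw.
  rewrite distrC -hw //; apply: eq_in_step_integral => z _; exact: distrC.
case: Z => [|z0 Z] // sZ aZ bZ.
rewrite (@eq_in_step_integral _ _ (fun z => (a <= z)%R%:R - (b <= z)%R%:R)); last first.
  move=> z _; have [bz|zb] := lerP b z; first by rewrite (le_trans ab bz) subrr normr0.
  by rewrite subr0 ger0_norm.
by rewrite step_integralB !step_integral_indicator // ler0_norm ?subr_le0 //; lra.
Qed.

End StepIntegral.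

Section Rank.
Variables (I : finType) (lt : rel I).
Hypotheses (irr_lt : irreflexive lt) (trans_lt : transitive lt)
  (total_lt : forall i j, i != j -> lt i j || lt j i).
Variable A : {set I}.

Definition rank i := #|[set j in A | lt j i]|.

Lemma rank_lt_card i : i \in A -> (rank i < #|A|)%N.
Proof.
move=> iA; apply/proper_card/properP; split.
  by apply/fintype.subsetP => j; rewrite inE => /andP[].
by exists i; rewrite // inE irr_lt andbF.
Qed.

Lemma rank_ltn i j : i \in A -> lt i j -> (rank i < rank j)%N.
Proof.
move=> iA ij; apply/proper_card/properP; split.
  by apply/fintype.subsetP => l; rewrite !inE => /andP[-> li]; rewrite (trans_lt li ij).
by exists i; rewrite !inE ?iA ?ij // irr_lt andbF.
Qed.

Lemma rank_inj : {in A &, injective rank}.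
Proof.
move=> i j iA jA eq_r; apply/eqP; apply: contraT => /total_lt/orP[] ltij.
  by have := rank_ltn iA ltij; rewrite eq_r ltnn.
by have := rank_ltn jA ltij; rewrite eq_r ltnn.
Qed.

Lemma big_rank (V : nmodType) (F : nat -> V) :
  \sum_(i in A) F (rank i) = \sum_(n < #|A|) F n.
Proof.
have uniq_ranks : uniq (map rank (enum A)).
  by rewrite map_inj_in_uniq ?enum_uniq // => i j; rewrite !mem_enum; apply: rank_inj.
have sub_iota : {subset map rank (enum A) <= iota 0 #|A|}.
  by move=> n /mapP[i]; rewrite mem_enum => iA ->; rewrite mem_iota rank_lt_card.
have [|_ ranks_iota] := uniq_min_size uniq_ranks sub_iota.
  by rewrite size_map size_iota cardE.
rewrite -big_enum -(big_map rank xpredT) -(big_mkord xpredT) /index_iota subn0.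
by apply/perm_big/uniq_perm; rewrite ?iota_uniq.
Qed.

End Rank.

Lemma floor_count_bounds (R : realDomainType) (n : nat) (g : R) :
  0 <= g <= n%:R -> g - 1 <= \sum_(i < n) (i.+1%:R <= g)%R%:R <= g.
Proof.
move=> /andP[g_ge0 g_le_n].
suff [h_le_n -> h_big] : let h := \sum_(i < n) (i.+1%:R <= g)%R%:R in
    [/\ h <= n%:R, h <= g & n%:R <= h \/ g - 1 <= h].
  by rewrite andbT; case: h_big => h_big; lra.
elim: n {g_le_n} => [|n [IH_n IH_g IH]]; first by rewrite big_ord0; split => //; left.
rewrite big_ord_recr /= -natr1.
have [n1g|gn1] := lerP (n%:R + 1) g; rewrite /= -?natr1.
  by split; lra.
by rewrite addr0; split; lra.
Qed.

Lemma fsbig_setT_seq (T : choiceType) (V : nmodType) (s : seq T) (f : T -> V) :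
  uniq s -> (forall a, f a != 0 -> a \in s) ->
  \sum_(a \in [set: T]) f a = \sum_(a <- s) f a.
Proof.
move=> s_uniq f_supp; rewrite -(fsbig_widen [set` s] setT f) //; last first.
  by move=> a [_ /= aNs]; apply/eqP/negPn/negP => /f_supp.
by rewrite (fsbig_seq _ _ s_uniq).
Qed.

Lemma norm_sum_same_sign (R : realDomainType) (I : Type) (r : seq I) (P : pred I)
    (F : I -> R) :
  (forall i, P i -> 0 <= F i) \/ (forall i, P i -> F i <= 0) ->
  \sum_(i <- r | P i) `|F i| = `|\sum_(i <- r | P i) F i|.
Proof.
case=> F_sign.
  by rewrite ger0_norm ?sumr_ge0 //; apply: eq_bigr => i /F_sign/ger0_norm.
rewrite ler0_norm -?sumrN; last first.
  by rewrite -oppr_ge0 -sumrN sumr_ge0 // => i /F_sign; rewrite oppr_ge0.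
by apply: eq_bigr => i /F_sign/ler0_norm.
Qed.

Lemma calibrated_rounding_error (R : realFieldType) (a n0 n1 w0 w1 : R) :
  0 <= a <= 1 -> (1 - a) * w1 = a * w0 ->
  `|n0 - w0| <= 1 -> `|n1 - w1| <= 1 -> `|(n0 + n1) * a - n1| <= 1.
Proof.
move=> /andP[a_ge0 a_le1] calib e0 e1.
have -> : (n0 + n1) * a - n1 =
    a * (n0 - w0) - (1 - a) * (n1 - w1) + (a * w0 - (1 - a) * w1) by ring.
rewrite calib subrr addr0.
apply: le_trans (ler_normB _ _) _.
rewrite !normrM (ger0_norm a_ge0) (@ger0_norm _ (1 - a)) ?subr_ge0 //.
have : a * `|n0 - w0| <= a by rewrite -[leRHS]mulr1 ler_wpM2l.
have : (1 - a) * `|n1 - w1| <= 1 - a by rewrite -[leRHS]mulr1 ler_wpM2l ?subr_ge0.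
lra.
Qed.

Section BucketMean.
Variables (R : realType) (T k : nat) (x : 'I_T -> R) (j : 'I_T -> nat).
Hypotheses (x01 : forall t, 0 <= x t <= 1) (j_lt : forall t, (j t < k)%N).

Definition bucket_size J : R := \sum_(t < T) (j t == J)%:R.
Definition bucket_ones J : R := \sum_(t < T) (j t == J)%:R * x t.
Definition bucket_mean J : R := bucket_ones J / bucket_size J.

Lemma sum_by_bucket (F : 'I_T -> R) :
  \sum_(t < T) F t = \sum_(J < k) \sum_(t < T) (j t == J)%:R * F t.
Proof.
rewrite exchange_big; apply: eq_bigr => t _.
rewrite (bigD1 (Ordinal (j_lt t))) //= eqxx mul1r big1 ?addr0 // => J /negbTE ne.
by rewrite -val_eqE /= eq_sym in ne; rewrite ne mul0r.
Qed.

Lemma bucket_ones_ge0 J : 0 <= bucket_ones J.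
Proof. by apply: sumr_ge0 => t _; rewrite mulr_ge0 //; case/andP: (x01 t). Qed.

Lemma bucket_ones_le_size J : bucket_ones J <= bucket_size J.
Proof.
apply: ler_sum => t _; rewrite -[leRHS]mulr1 ler_wpM2l //.
by case/andP: (x01 t).
Qed.

Lemma bucket_size_mean J : bucket_size J * bucket_mean J = bucket_ones J.
Proof.
have [size0|size_neq0] := eqVneq (bucket_size J) 0; last by rewrite mulrC divfK.
apply/esym/eqP; rewrite size0 mul0r eq_le bucket_ones_ge0 andbT -size0.
exact: bucket_ones_le_size.
Qed.

Lemma bucket_mean01 J : 0 <= bucket_mean J <= 1.
Proof.
have [size0|size_neq0] := eqVneq (bucket_size J) 0.
  by rewrite /bucket_mean size0 invr0 mulr0 lexx ler01.
have size_gt0 : 0 < bucket_size J.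
  by rewrite lt_def size_neq0 (le_trans (bucket_ones_ge0 J) (bucket_ones_le_size J)).
rewrite /bucket_mean divr_ge0 ?bucket_ones_ge0 ?(ltW size_gt0) //.
by rewrite ler_pdivrMr // mul1r bucket_ones_le_size.
Qed.

Lemma bucket_mean_calibrated : calibrated x (fun t => bucket_mean (j t)).
Proof.
split=> [t|a _]; first exact: bucket_mean01.
rewrite sum_by_bucket big1 // => J _.
rewrite (eq_bigr (fun t => (bucket_mean J == a)%:R *
    ((j t == J)%:R * x t - (j t == J)%:R * bucket_mean J))); last first.
  move=> t _; have [->|_] := eqVneq (j t) J; last by rewrite !mul0r subrr mulr0.
  by rewrite !mul1r mulrC.
by rewrite -mulr_sumr sumrB -mulr_suml bucket_size_mean subrr mulr0.
Qed.

Lemma sum_dist_bucket_mean (a : nat -> R) :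
  \sum_(t < T) `|a (j t) - bucket_mean (j t)| =
  \sum_(J < k) `|bucket_size J * a J - bucket_ones J|.
Proof.
rewrite sum_by_bucket; apply: eq_bigr => J _.
rewrite (eq_bigr (fun t => (j t == J)%:R * `|a J - bucket_mean J|)); last first.
  by move=> t _; case: (eqVneq (j t) J) => [->|]; rewrite ?mul0r.
have size_ge0 : 0 <= bucket_size J by apply: sumr_ge0.
rewrite -mulr_suml -/(bucket_size J) -{1}(ger0_norm size_ge0) -normrM.
by rewrite mulrBr bucket_size_mean.
Qed.

End BucketMean.

Section MonotoneCoupling.
Variables (R : realFieldType) (T k : nat) (P : pred 'I_T) (p : 'I_T -> R)
  (a : nat -> R) (w : 'I_T -> nat -> R).
Hypotheses (p01 : forall t, 0 <= p t <= 1)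
  (a01 : forall i, (i < k)%N -> 0 <= a i <= 1)
  (a_mono : forall i i', (i <= i')%N -> (i' < k)%N -> a i <= a i')
  (w_ge0 : forall t i, 0 <= w t i)
  (w_sum1 : forall t, \sum_(i < k) w t i = 1).

Definition lt_p (t t' : 'I_T) := (p t < p t') || (p t == p t') && (t < t')%N.

Lemma irr_lt_p : irreflexive lt_p.
Proof. by move=> t; rewrite /lt_p ltxx eqxx ltnn. Qed.

Lemma trans_lt_p : transitive lt_p.
Proof.
move=> t2 t1 t3; rewrite /lt_p => /orP[lt12|/andP[/eqP-> lt12]] /orP[lt23|/andP[/eqP<- lt23]].
- by rewrite (lt_trans lt12 lt23).
- by rewrite lt12.
- by rewrite lt23.
- by rewrite eqxx (ltn_trans lt12 lt23) orbT.
Qed.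

Lemma total_lt_p t t' : t != t' -> lt_p t t' || lt_p t' t.
Proof.
rewrite /lt_p => neq; case: (ltgtP (p t) (p t')) => //= _.
by case: (ltngtP t t') => // /val_inj eq_t; rewrite eq_t eqxx in neq.
Qed.

Let A := [set t | P t]%SET.

Definition mass m : R := \sum_(t | P t) \sum_(i < k | (i < m)%N) w t i.

(* Quantile coupling: the element of [P] of rank [r] for [lt_p] goes to the
   first atom at which the cumulative mass reaches [r + 1]. *)
Definition bucket t : nat :=
  count (fun i => mass i.+1 < (rank lt_p A t).+1%:R) (iota 0 k).

Lemma mass_mono m m' : (m <= m')%N -> mass m <= mass m'.
Proof.
move=> le_mm'; apply: ler_sum => t _.
rewrite [leLHS]big_mkcond [leRHS]big_mkcond /=; apply: ler_sum => i _.
case: ifP => [lt_im|_]; first by rewrite (leq_trans lt_im le_mm').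
by case: ifP.
Qed.

Lemma mass0 : mass 0 = 0.
Proof. by apply: big1 => t _; apply: big_pred0 => i; rewrite ltn0. Qed.

Lemma mass_k : mass k = #|A|%:R.
Proof.
rewrite /mass (eq_bigr (fun _ => 1)) ?sumr_const; last first.
  by move=> t _; rewrite -(w_sum1 t); apply: eq_bigl => i; rewrite ltn_ord.
by congr (_ *+ _); apply: eq_card => t; rewrite inE.
Qed.

Lemma mass_bounds m : (m <= k)%N -> 0 <= mass m <= #|A|%:R.
Proof. by move=> le_mk; rewrite -mass0 -mass_k !mass_mono. Qed.

Lemma bucket_ltE m t : (m <= k)%N ->
  (bucket t < m)%N = ((rank lt_p A t).+1%:R <= mass m).
Proof.
case: m => [|m] le_mk; first by rewrite ltn0 mass0 leNgt ltr0Sn.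
rewrite ltnS leqNgt -(@downclosed_ltn_count (fun i => mass i.+1 < _) k) ?leNgt //.
by move=> i i' le_ii' _ /=; apply: le_lt_trans; apply: mass_mono.
Qed.

Lemma bucket_lt t : P t -> (bucket t < k)%N.
Proof.
by move=> Pt; rewrite bucket_ltE // mass_k ler_nat (rank_lt_card irr_lt_p) ?inE.
Qed.

Lemma bucket_mono t t' : P t -> lt_p t t' -> (bucket t <= bucket t')%N.
Proof.
move=> Pt lt_tt'; apply: sub_count => i /= lt_i; apply: lt_le_trans lt_i _.
by rewrite ler_nat ltnS ltnW // (rank_ltn irr_lt_p trans_lt_p) ?inE.
Qed.

Lemma count_bucket_lt m : (m <= k)%N ->
  mass m - 1 <= \sum_(t | P t) (bucket t < m)%:R <= mass m.
Proof.
move=> le_mk.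
rewrite (eq_bigr (fun t => ((rank lt_p A t).+1%:R <= mass m)%R%:R)); last first.
  by move=> t _; rewrite bucket_ltE //.
rewrite (eq_bigl (fun t => t \in A)); last by move=> t; rewrite inE.
rewrite (big_rank irr_lt_p trans_lt_p total_lt_p A (fun n => (n.+1%:R <= mass m)%R%:R)).
exact/floor_count_bounds/mass_bounds.
Qed.

Lemma bucket_count_dist J : (J < k)%N ->
  `|\sum_(t | P t) (bucket t == J)%:R - \sum_(t | P t) w t J| <= 1.
Proof.
move=> lt_Jk.
have count_eq : \sum_(t | P t) (bucket t == J)%:R =
    \sum_(t | P t) (bucket t < J.+1)%:R - \sum_(t | P t) (bucket t < J)%:R :> R.
  rewrite -sumrB; apply: eq_bigr => t _; rewrite ltnS leq_eqVlt.
  by case: (eqVneq (bucket t) J) => [->|_] /=; rewrite ?ltnn ?subr0 ?subrr.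
have mass_eq : \sum_(t | P t) w t J = mass J.+1 - mass J.
  rewrite -sumrB; apply: eq_bigr => t _.
  rewrite [in RHS](bigD1 (Ordinal lt_Jk)) //= (eq_bigl (fun i : 'I_k => (i < J)%N)).
    by rewrite addrK.
  move=> i; rewrite -val_eqE /= ltnS leq_eqVlt.
  by case: eqVneq => [->|]; rewrite ?ltnn ?andbT.
move: (count_bucket_lt (ltnW lt_Jk)) (count_bucket_lt lt_Jk).
rewrite count_eq mass_eq ler_norml => /andP[? ?] /andP[? ?].
by apply/andP; split; lra.
Qed.

Definition atoms_below z := count (fun i => a i <= z) (iota 0 k).

Lemma a_leE i z : (i < k)%N -> (a i <= z) = (i < atoms_below z)%N.
Proof.
apply: (@downclosed_ltn_count (fun i => a i <= z)) => j j' le_jj' lt_j'k /=.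
exact/le_trans/a_mono.
Qed.

Lemma atoms_below_le z : (atoms_below z <= k)%N.
Proof. by rewrite (leq_trans (count_size _ _)) ?size_iota. Qed.

Definition cdf_p z : R := \sum_(t | P t) (p t <= z)%R%:R.
Definition cdf_w z : R := \sum_(t | P t) \sum_(i < k) w t i * (a i <= z)%R%:R.
Definition cdf_bucket z : R := \sum_(t | P t) (a (bucket t) <= z)%R%:R.

Lemma cdf_w_mass z : cdf_w z = mass (atoms_below z).
Proof.
apply: eq_bigr => t _; rewrite [RHS]big_mkcond; apply: eq_bigr => i _.
by rewrite a_leE //; case: ifP; rewrite ?mulr1 ?mulr0.
Qed.

Lemma cdf_bucket_count z :
  cdf_bucket z = \sum_(t | P t) (bucket t < atoms_below z)%:R.
Proof. by apply: eq_bigr => t Pt; rewrite a_leE ?bucket_lt. Qed.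

Lemma dist_cdf_w_bucket z : `|cdf_w z - cdf_bucket z| <= 1.
Proof.
rewrite cdf_w_mass cdf_bucket_count ler_norml.
by have /andP[? ?] := count_bucket_lt (atoms_below_le z); apply/andP; split; lra.
Qed.

Lemma dist_cdf_p_w z : `|cdf_p z - cdf_w z| <=
  \sum_(t | P t) \sum_(i < k) w t i * `|(p t <= z)%R%:R - (a i <= z)%R%:R|.
Proof.
rewrite /cdf_p /cdf_w -sumrB; apply: le_trans (ler_norm_sum _ _ _) _.
apply: ler_sum => t _.
rewrite -[X in `|X - _|]mul1r -(w_sum1 t) mulr_suml -sumrB.
apply: le_trans (ler_norm_sum _ _ _) _; apply: ler_sum => i _.
by rewrite -mulrBr normrM ger0_norm.
Qed.

(* The coupling is monotone, so the differences of indicators below all have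
   the same sign. *)
Lemma sum_dist_indicator_bucket z :
  \sum_(t | P t) `|(p t <= z)%R%:R - (a (bucket t) <= z)%R%:R| =
  `|cdf_p z - cdf_bucket z|.
Proof.
rewrite /cdf_p /cdf_bucket -sumrB; apply: norm_sum_same_sign.
have [/existsP[t0 /and3P[Pt0 z_lt_pt0 at0_le_z]]|] :=
  boolP [exists t, [&& P t, z < p t & a (bucket t) <= z]].
  right=> t Pt; case: (lerP (p t) z) => [pt_le_z|_]; last by rewrite subr_le0 ler0n.
  have bt_le : (bucket t <= bucket t0)%N.
    by apply: bucket_mono; rewrite // /lt_p (le_lt_trans pt_le_z z_lt_pt0).
  by rewrite (le_trans (a_mono bt_le (bucket_lt Pt0)) at0_le_z) subrr.
rewrite negb_exists => /forallP no_t; left=> t Pt.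
case: (lerP (p t) z) => [_|z_lt_pt]; first by rewrite subr_ge0 lern1 leq_b1.
by have := no_t t; rewrite Pt z_lt_pt /= => /negbTE ->; rewrite subrr.
Qed.

Let grid := sort <=%R (map p (enum 'I_T) ++ map a (iota 0 k)).

Lemma sorted_grid : sorted <=%R grid.
Proof. by apply: sort_sorted => u v; apply: le_total. Qed.

Lemma grid01 : {subset grid <= `[0, 1]}.
Proof.
move=> z; rewrite mem_sort mem_cat in_itv /= => /orP[/mapP[t _ ->]|/mapP[i]].
  exact: p01.
by rewrite mem_iota add0n => /andP[_ lt_ik] ->; apply: a01.
Qed.

Lemma p_in_grid t : p t \in grid.
Proof. by rewrite mem_sort mem_cat map_f ?mem_enum. Qed.

Lemma a_in_grid i : (i < k)%N -> a i \in grid.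
Proof. by move=> lt_ik; rewrite mem_sort mem_cat map_f ?orbT ?mem_iota. Qed.

Lemma coupling_cost :
  \sum_(t | P t) `|p t - a (bucket t)| <=
  \sum_(t | P t) \sum_(i < k) w t i * `|p t - a i| + 1.
Proof.
have cost_bucket : \sum_(t | P t) `|p t - a (bucket t)| = step_integral grid
    (fun z => \sum_(t | P t) `|(p t <= z)%R%:R - (a (bucket t) <= z)%R%:R|).
  rewrite step_integral_sum; apply: eq_bigr => t Pt.
  by rewrite step_integral_dist ?sorted_grid ?p_in_grid ?a_in_grid ?bucket_lt.
have cost_w : \sum_(t | P t) \sum_(i < k) w t i * `|p t - a i| = step_integral grid
    (fun z => \sum_(t | P t) \sum_(i < k) w t i * `|(p t <= z)%R%:R - (a i <= z)%R%:R|).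
  rewrite step_integral_sum; apply: eq_bigr => t _.
  rewrite step_integral_sum; apply: eq_bigr => i _.
  by rewrite step_integralZ step_integral_dist ?sorted_grid ?p_in_grid ?a_in_grid.
rewrite cost_bucket cost_w.
apply: (@le_trans _ _ (step_integral grid (fun z => `|cdf_p z - cdf_w z| + 1))).
  apply: ler_step_integral sorted_grid _ => z; rewrite sum_dist_indicator_bucket.
  by apply: le_trans (ler_distD (cdf_w z) _ _) _; rewrite lerD2l dist_cdf_w_bucket.
rewrite step_integralD lerD //; first exact: ler_step_integral sorted_grid dist_cdf_p_w.
exact: step_integral_const1_le1 sorted_grid grid01.
Qed.

End MonotoneCoupling.

Lemma CalDist_le_l1dist (R : realType) (T : nat) (x p q : 'I_T -> R) :
  calibrated x q -> CalDist x p <= l1dist p q.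
Proof.
move=> q_cal; apply: ge_inf; last by exists q.
by exists 0 => _ [q' _ <-]; apply: sumr_ge0 => t _; apply: normr_ge0.
Qed.

Section CalibratedRounding.
Variables (R : realType) (T : nat) (x p : 'I_T -> R) (S : {fset R}) (D : 'I_T -> R -> R).
Hypotheses (hx : forall t, x t = 0 \/ x t = 1)
  (hp : forall t, 0 <= p t <= 1)
  (hS : forall a, a \in S -> 0 <= a <= 1)
  (hD : lowC x D)
  (hDS : forall t a, D t a != 0 -> a \in S).

Let s := sort <=%R (enum_fset S).
Let k := size s.
Let atom i := nth 0 s i.
Let w t i := D t (atom i).
Let class (c : bool) := [pred t | (x t == 1) == c].
Let j t := bucket k (class (x t == 1)) p w t.
Let q t := bucket_mean x j (j t).

Lemma card_S : #|` S| = k.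
Proof. by rewrite /k size_sort. Qed.

Lemma atom_mono i i' : (i <= i')%N -> (i' < k)%N -> atom i <= atom i'.
Proof.
move=> le_ii' lt_i'k; apply: (sorted_leq_nth le_trans lexx).
- by apply: sort_sorted => u v; apply: le_total.
- by rewrite inE (leq_ltn_trans le_ii').
- by rewrite inE.
- exact: le_ii'.
Qed.

Lemma atom_in_S i : (i < k)%N -> atom i \in S.
Proof. by move=> lt_ik; rewrite -(mem_sort <=%R) mem_nth. Qed.

Lemma sum_atoms (f : R -> R) : (forall a, f a != 0 -> a \in S) ->
  \sum_(a \in [set: R]) f a = \sum_(i < k) f (atom i).
Proof.
move=> f_supp; rewrite (@fsbig_setT_seq _ _ s) ?sort_uniq ?fset_uniq //.
  by rewrite (big_nth 0) big_mkord.
by move=> a /f_supp; rewrite mem_sort.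
Qed.

Lemma w_ge0 t i : 0 <= w t i.
Proof. by case: hD => /(_ t)[D_ge0 _ _ _] _; apply: D_ge0. Qed.

Lemma w_sum1 t : \sum_(i < k) w t i = 1.
Proof. by case: hD => /(_ t)[_ _ _ <-] _; rewrite sum_atoms // => a /hDS. Qed.

Lemma x01 t : 0 <= x t <= 1.
Proof. by case: (hx t) => ->; rewrite ?lexx ?ler01. Qed.

Lemma x_class c t : class c t -> x t = c%:R.
Proof. by move=> /eqP <-; case: (hx t) => ->; rewrite ?eqxx // eq_sym oner_eq0. Qed.

Lemma sum_by_class (F : 'I_T -> R) :
  \sum_(t < T) F t = \sum_(t | class true t) F t + \sum_(t | class false t) F t.
Proof.
rewrite (bigID (class true)) /=; congr (_ + _).
by apply: eq_bigl => t; case: (x t == 1).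
Qed.

Lemma j_class c t : class c t -> j t = bucket k (class c) p w t.
Proof. by rewrite /j => /eqP ->. Qed.

Lemma j_lt t : (j t < k)%N.
Proof. exact: (bucket_lt (P := class _) p w_ge0 w_sum1 (eqxx (x t == 1))). Qed.

Lemma q_calibrated : calibrated x q.
Proof. exact: bucket_mean_calibrated x01 j_lt. Qed.

Lemma cost_to_atoms :
  \sum_(t < T) `|p t - atom (j t)| <= l1dist_distr p D + 2.
Proof.
have class_cost c : \sum_(t | class c t) `|p t - atom (j t)| <=
    \sum_(t | class c t) \sum_(i < k) w t i * `|p t - atom i| + 1.
  rewrite (eq_bigr (fun t => `|p t - atom (bucket k (class c) p w t)|)); last first.
    by move=> t /j_class ->.
  apply: coupling_cost hp _ atom_mono w_ge0 w_sum1 => i /atom_in_S; exact: hS.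
have distr_atoms : l1dist_distr p D = \sum_(t < T) \sum_(i < k) w t i * `|p t - atom i|.
  apply: eq_bigr => t _; apply: sum_atoms => a.
  by rewrite mulf_eq0 negb_or => /andP[/hDS].
rewrite distr_atoms !sum_by_class.
by have := class_cost true; have := class_cost false; lra.
Qed.

Lemma calibration_at_atom J : (J < k)%N ->
  (1 - atom J) * \sum_(t | class true t) w t J =
  atom J * \sum_(t | class false t) w t J.
Proof.
move=> lt_Jk; case: hD => _ /(_ _ (hS (atom_in_S lt_Jk))).
rewrite sum_by_class !mulr_sumr.
rewrite (eq_bigr (fun t => (1 - atom J) * w t J)) => [|t /x_class->]; last by [].
rewrite [X in _ + X](eq_bigr (fun t => - (atom J * w t J))) => [|t /x_class->].
  by rewrite sumrN => /eqP; rewrite subr_eq0 => /eqP.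
by rewrite sub0r mulNr.
Qed.

Lemma count_class_dist c J : (J < k)%N ->
  `|\sum_(t | class c t) (j t == J)%:R - \sum_(t | class c t) w t J| <= 1.
Proof.
move=> lt_Jk; rewrite (eq_bigr (fun t => (bucket k (class c) p w t == J)%:R)).
  by have := bucket_count_dist (class c) p w_ge0 w_sum1 lt_Jk.
by move=> t /j_class ->.
Qed.

Lemma bucket_size_by_class J : bucket_size R j J =
  \sum_(t | class false t) (j t == J)%:R + \sum_(t | class true t) (j t == J)%:R.
Proof. by rewrite /bucket_size sum_by_class addrC. Qed.

Lemma bucket_ones_by_class J :
  bucket_ones x j J = \sum_(t | class true t) (j t == J)%:R.
Proof.
rewrite /bucket_ones sum_by_class [X in _ + X]big1 ?addr0 => [|t /x_class->].
  by apply: eq_bigr => t /x_class->; rewrite mulr1.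
by rewrite mulr0.
Qed.

Lemma atoms_to_mean : \sum_(t < T) `|atom (j t) - q t| <= k%:R.
Proof.
rewrite /q (sum_dist_bucket_mean x01 j_lt atom) -[k in k%:R]card_ord -sumr_const.
apply: ler_sum => J _; rewrite bucket_size_by_class bucket_ones_by_class.
have lt_Jk := ltn_ord J.
apply: calibrated_rounding_error (calibration_at_atom lt_Jk)
  (count_class_dist _ lt_Jk) (count_class_dist _ lt_Jk).
exact/hS/atom_in_S.
Qed.

Lemma rounding_cost : (0 < T)%N -> l1dist p q <= l1dist_distr p D + 4 * k%:R.
Proof.
move=> T_gt0.
have k_ge1 : 1 <= k%:R :> R by rewrite ler1n (leq_ltn_trans _ (j_lt (Ordinal T_gt0))).
have triangle : l1dist p q <=
    \sum_(t < T) `|p t - atom (j t)| + \sum_(t < T) `|atom (j t) - q t|.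
  by rewrite -big_split; apply: ler_sum => t _; apply: ler_distD.
by have := cost_to_atoms; have := atoms_to_mean; lra.
Qed.

End CalibratedRounding.

Theorem lemma2 (R : realType) (T : nat) (hT : (0 < T)%N)
  (x p : 'I_T -> R) (S : {fset R}) (D : 'I_T -> R -> R)
  (hx : forall t, x t = 0 \/ x t = 1)
  (hp : forall t, 0 <= p t <= 1)
  (hS : forall a, a \in S -> 0 <= a <= 1)
  (hD : lowC x D)
  (hDS : forall t a, D t a != 0 -> a \in S) :
  CalDist x p <= l1dist_distr p D + 4 * (#|` S|)%:R.
Proof.
rewrite card_S.
apply: le_trans (rounding_cost hx hp hS hD hDS hT).
exact/CalDist_le_l1dist/(q_calibrated p hx hD hDS).
Qed.
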